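(* Let $\mathcal{X}$ be a compact metric space, let $\Theta$ be a compact metric space, and let $f_\theta:\mathcal{X}\to\mathbb{R}^p$, $\theta\in\Theta$, be a family of functions such that (i) for each $\theta\in\Theta$ the image $f_\theta(\mathcal{X})$ spans $\mathbb{R}^p$, and (ii) the map $(x,\theta)\mapsto f_\theta(x)$ is continuous on $\mathcal{X}\times\Theta$. Then there exist $n_{\rm st}\in\mathbb{N}$ and points $x_1,\ldots,x_{n_{\rm st}}\in\mathcal{X}$ such that for every $\theta\in\Theta$ the vectors $f_\theta(x_1),\ldots,f_\theta(x_{n_{\rm st}})$ span $\mathbb{R}^p$. Hence, for such points, the design $\xi_{n_{\rm st}}=\frac{1}{n_{\rm st}}\sum_{i=1}^{n_{\rm st}}\delta_{x_i}$ has positive definite information matrix $M(\xi_{n_{\rm st}},\theta)$ for all $\theta\in\Theta$.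
   Context: A design $\xi$ is a probability measure on $\mathcal{X}$ with finite support; $\delta_x$ is the point mass at $x$. The information matrix of a design $\xi$ at $\theta\in\Theta$ is $M(\xi,\theta)=\sum_{x\in\mathrm{supp}(\xi)}\xi(x)\,f_\theta(x)f_\theta^{\mathsf T}(x)$. *)

From HB Require Import structures.
From mathcomp Require Import all_boot all_order all_algebra.
From mathcomp Require Import all_classical all_reals all_analysis.
Set Implicit Arguments. Unset Strict Implicit. Unset Printing Implicit Defensive.
Import Order.TTheory GRing.Theory Num.Theory.
Import numFieldNormedType.Exports.
Local Open Scope ring_scope.
Local Open Scope classical_set_scope.

Definition spans (R : realType) (p : nat) (S : set 'cV[R]_p) : Prop :=
  forall v : 'cV[R]_p, exists (n : nat) (w : 'I_n -> 'cV[R]_p) (c : 'I_n -> R),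
    (forall i, S (w i)) /\ v = \sum_(i < n) c i *: w i.

(* Information matrix of a finitely supported design with mass function [xi]
   and support list [supp] (duplicates removed):
   M(xi,theta) = sum_{x in supp} xi(x) f_theta(x) f_theta(x)^T. *)
Definition infomat (R : realType) (X Theta : choiceType) (p : nat)
  (f : Theta -> X -> 'cV[R]_p) (xi : X -> R) (supp : seq X) (th : Theta)
  : 'M[R]_p :=
  \sum_(x <- undup supp) xi x *: (f th x *m (f th x)^T).

(* The design xi_n = (1/n) sum_i delta_{x_i}: its mass function and support. *)
Definition unif_design_mass (R : realType) (X : choiceType) (n : nat)
  (xs : 'I_n -> X) (x : X) : R :=
  (\sum_(i < n) (xs i == x)%:R) / n%:R.

Definition unif_design_supp (X : choiceType) (n : nat) (xs : 'I_n -> X)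
  : seq X := [seq xs i | i <- enum 'I_n].

Definition posdef (R : realType) (p : nat) (A : 'M[R]_p) : Prop :=
  A^T = A /\ forall v : 'cV[R]_p, v != 0 -> 0 < (v^T *m A *m v) ord0 ord0.

From HB Require Import structures.
From mathcomp Require Import all_boot all_order all_algebra.
From mathcomp Require Import all_classical all_reals all_analysis.
Import Order.TTheory GRing.Theory Num.Theory.
Import numFieldNormedType.Exports.
Local Open Scope ring_scope.
Local Open Scope classical_set_scope.
Set Implicit Arguments. Unset Strict Implicit. Unset Printing Implicit Defensive.

(* For each θ₀ the spanning hypothesis writes the identity matrix as a finite
   sum Σ_k f_θ₀(x_k) c_kᵀ. The matrix Σ_k f_θ(x_k) c_kᵀ depends continuously on
   θ, so it remains invertible near θ₀, and there the finitely many points x_k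
   still span. Compactness of Θ merges finitely many of these point sets into
   one that works for every θ. Finally vᵀ M(ξ,θ) v = Σ_x ξ(x) (vᵀ f_θ(x))², so
   M(ξ,θ) is positive definite as soon as the positively weighted support points
   of ξ span: otherwise a nonzero v is orthogonal to a spanning set. *)

Lemma trmx_mul_self_eq0 (R : realDomainType) p (v : 'cV[R]_p) :
  (v^T *m v) 0 0 = 0 -> v = 0.
Proof.
rewrite mxE => /eqP; rewrite psumr_eq0 => [/allP v0|i _]; last first.
  by rewrite mxE -expr2 sqr_ge0.
apply/matrixP => i j; rewrite (ord1 j) mxE.
have /implyP/(_ isT) := v0 i (mem_index_enum i).
by rewrite mxE -expr2 sqrf_eq0 => /eqP.
Qed.

Section LinearSpan.
Variables (R : realType) (p : nat).
Implicit Types (S T : set 'cV[R]_p) (u v : 'cV[R]_p).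

Definition in_span S v := exists n (w : 'I_n -> 'cV[R]_p) (c : 'I_n -> R),
  (forall i, S (w i)) /\ v = \sum_(i < n) c i *: w i.

Lemma in_span0 S : in_span S 0.
Proof. by exists 0%N, (fun _ => 0), (fun _ => 0); split=> [[]|]; rewrite ?big_ord0. Qed.

Lemma in_span_mem S v : S v -> in_span S v.
Proof. by exists 1%N, (fun _ => v), (fun _ => 1); rewrite big_ord1 scale1r. Qed.

Lemma in_spanZ S a v : in_span S v -> in_span S (a *: v).
Proof.
move=> [n [w [c [Sw ->]]]]; exists n, w, (fun i => a * c i); split => //.
by rewrite scaler_sumr; apply: eq_bigr => i _; rewrite scalerA.
Qed.

Lemma in_spanD S u v : in_span S u -> in_span S v -> in_span S (u + v).
Proof.
move=> [n1 [w1 [c1 [Sw1 ->]]]] [n2 [w2 [c2 [Sw2 ->]]]].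
pose glue (A : Type) (a : 'I_n1 -> A) (b : 'I_n2 -> A) (i : 'I_(n1 + n2)) :=
  match fintype.split i with inl j => a j | inr j => b j end.
exists (n1 + n2)%N, (glue _ w1 w2), (glue _ c1 c2); split.
  by move=> i; rewrite /glue; case: (fintype.split i).
rewrite big_split_ord /glue; congr (_ + _); apply: eq_bigr => i _.
  by rewrite (unsplitK (inl i)).
by rewrite (unsplitK (inr i)).
Qed.

Lemma in_span_sum S (I : Type) (r : seq I) (P : pred I) (F : I -> 'cV[R]_p) :
  (forall i, P i -> in_span S (F i)) -> in_span S (\sum_(i <- r | P i) F i).
Proof. exact: (big_ind (in_span S) (in_span0 S) (@in_spanD S)). Qed.

Lemma in_span_subset S T v : S `<=` T -> in_span S v -> in_span T v.
Proof. by move=> ST [n [w [c [Sw ->]]]]; exists n, w, c; split => // i; apply: ST. Qed.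

Lemma in_span_rangeP (X : Type) (g : X -> 'cV[R]_p) v :
  in_span (range g) v <->
  exists n (x : 'I_n -> X) (c : 'I_n -> R), v = \sum_(i < n) c i *: g (x i).
Proof.
split=> [[n [w [c [gw ->]]]]|[n [x [c ->]]]]; last first.
  by exists n, (g \o x), c; split => // i; exists (x i).
have /boolp.choice[x xE] : forall i, exists y, g y = w i.
  by move=> i; have [y _ <-] := gw i; exists y.
by exists n, x, c; apply: eq_bigr => i _; rewrite xE.
Qed.

Lemma spans_orthogonal_eq0 S v :
  spans S -> (forall w, S w -> (v^T *m w) 0 0 = 0) -> v = 0.
Proof.
move=> Sspan vS0; apply: trmx_mul_self_eq0.
have [n [w [c [Sw vE]]]] := Sspan v.
rewrite {2}vE mulmx_sumr summxE big1 // => i _.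
by rewrite -scalemxAr mxE vS0 ?mulr0.
Qed.

Lemma unitmx_sum_outer_spans (I : eqType) (r : seq I) S
    (w : I -> 'cV[R]_p) (c : I -> 'rV[R]_p) :
  (forall i, i \in r -> S (w i)) ->
  \sum_(i <- r) w i *m c i \in unitmx -> spans S.
Proof.
move=> Sw Aunit v.
(* v = A (A^-1 v) = \sum_i (c i *m A^-1 v) *: w i, where A is the invertible sum *)
rewrite -[v](mulKVmx Aunit) mulmx_suml big_seq.
apply: in_span_sum => i ri.
rewrite -mulmxA [c i *m _]mx11_scalar mul_mx_scalar.
exact/in_spanZ/in_span_mem/Sw.
Qed.

Lemma spans_range_sum_outer_eq1 (X : Type) (g : X -> 'cV[R]_p) :
  spans (range g) ->
  exists r : seq (X * 'rV[R]_p), \sum_(xc <- r) g xc.1 *m xc.2 = 1%:M.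
Proof.
move=> gspan.
have /boolp.choice[r rE] : forall k : 'I_p, exists rk : seq (X * 'rV[R]_p),
    \sum_(xc <- rk) g xc.1 *m xc.2 = delta_mx k k.
  move=> k; have [n [x [c ekE]]] := (in_span_rangeP g _).1 (gspan (delta_mx k 0)).
  exists [seq (x i, c i *: delta_mx 0 k) | i <- enum 'I_n].
  rewrite big_map big_enum /= -(mul_delta_mx (0 : 'I_1) k k) ekE mulmx_suml.
  by apply: eq_bigr => i _; rewrite -scalemxAl scalemxAr.
exists (flatten [seq r k | k <- enum 'I_p]).
rewrite big_flatten big_map big_enum mx1_sum_delta /=.
by apply: eq_bigr => k _; rewrite rE.
Qed.

End LinearSpan.

Lemma cvg_det (R : numFieldType) (T : Type) (F : set_system T) (FF : Filter F)
    n (A : T -> 'M[R]_n) (B : 'M[R]_n) :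
  (forall i j, A t i j @[t --> F] --> B i j) -> \det (A t) @[t --> F] --> \det B.
Proof.
move=> cvgA; apply: (cvg_big add_continuous) => // s _.
apply: cvgM; first exact: cvg_cst.
by apply: (cvg_big mul_continuous) => // i _; exact: cvgA.
Qed.

Lemma compact_seq_witness (T : topologicalType) (X : eqType)
    (P : seq X -> T -> Prop) :
  compact [set: T] ->
  (forall s s' t, {subset s <= s'} -> P s t -> P s' t) ->
  (forall t0 : T, exists s, \forall t \near t0, P s t) ->
  exists s, forall t, P s t.
Proof.
move=> cT Pmono Plocal.
pose F : set_system (seq X) :=
  filter_from [set: seq X] (fun s => [set s' : seq X | {subset s <= s'}]).
have FF : Filter F.
  apply: filter_fromT_filter; first by exists [::].
  move=> s1 s2; exists (s1 ++ s2) => s' /= sub.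
  by split=> x xs; apply: sub; rewrite mem_cat xs ?orbT.
have [|s _ sP] := (compact_near_coveringP [set: T]).1 cT (seq X) F P FF.
  move=> t0 _; have [s0 Ps0] := Plocal t0.
  exists ([set t | P s0 t], [set s' | {subset s0 <= s'}]).
    by split => //; exists s0.
  by case=> t s' /= [Pt sub]; exact: Pmono Pt.
by exists s => t; exact: (sP s (fun x xs => xs) t I).
Qed.

Section UniformSpanning.
Variables (R : realType) (X : choiceType) (Theta : topologicalType) (p : nat).
Variable f : Theta -> X -> 'cV[R]_p.
Hypothesis f_cont : forall x, continuous (f^~ x).
Hypothesis f_spans : forall th, spans (range (f th)).

Lemma near_spans (th0 : Theta) :
  exists s : seq X, \forall th \near th0, spans [set f th x | x in [set` s]].
Proof.
have [r rE] := spans_range_sum_outer_eq1 (f_spans th0).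
pose A th := \sum_(xc <- r) f th xc.1 *m xc.2.
have AE th i j : A th i j = \sum_(xc <- r) f th xc.1 i 0 * xc.2 0 j.
  by rewrite summxE; apply: eq_bigr => xc _; rewrite mxE big_ord1.
have cvg_detA : \det (A th) @[th --> th0] --> \det (A th0).
  apply: cvg_det => i j; under eq_cvg do rewrite AE; rewrite AE.
  apply: (cvg_big add_continuous) => // xc _; apply: cvgM; last exact: cvg_cst.
  apply: (continuous_comp (f := f^~ xc.1) (g := fun M : 'cV[R]_p => M i 0)).
    exact: f_cont.
  exact: coord_continuous.
exists (unzip1 r); near=> th.
apply: (unitmx_sum_outer_spans (w := fun xc => f th xc.1) (c := snd)).
  by move=> xc xcr; exists xc.1 => //; exact: (map_f fst xcr).
rewrite unitmxE unitfE; near: th.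
by apply: (cvgr_neq0 _ cvg_detA); rewrite /A rE det1 oner_neq0.
Unshelve. all: end_near.
Qed.

Hypothesis Theta_compact : compact [set: Theta].

Lemma uniform_spanning_points :
  exists n (xs : 'I_n -> X), forall th, spans [set f th (xs i) | i in [set: 'I_n]].
Proof.
have [s s_spans] : exists s : seq X, forall th, spans [set f th x | x in [set` s]].
  apply: compact_seq_witness Theta_compact _ _; last exact: near_spans.
  move=> s s' th ss' sspan v; apply: in_span_subset (sspan v).
  by move=> _ [x xs <-]; exists x => //; exact: ss'.
exists (size s), (tnth (in_tuple s)) => th v; apply: in_span_subset (s_spans th v).
move=> _ [x xs <-]; have x_lt : (index x s < size s)%N by rewrite index_mem.
exists (Ordinal x_lt) => //.
by rewrite (tnth_nth x) /= nth_index.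
Qed.

End UniformSpanning.

Section InformationMatrix.
Variables (R : realType) (X Theta : choiceType) (p : nat).
Variables (f : Theta -> X -> 'cV[R]_p) (th : Theta).

Lemma infomat_tr xi supp : (infomat f xi supp th)^T = infomat f xi supp th.
Proof.
by rewrite linear_sum; apply: eq_bigr => x _; rewrite linearZ /= trmx_mul trmxK.
Qed.

Lemma infomat_quad xi supp (v : 'cV[R]_p) :
  (v^T *m infomat f xi supp th *m v) 0 0 =
  \sum_(x <- undup supp) xi x * ((v^T *m f th x) 0 0) ^+ 2.
Proof.
rewrite mulmx_sumr mulmx_suml summxE; apply: eq_bigr => x _.
rewrite -scalemxAr -scalemxAl mxE !mulmxA -[_ *m (f th x)^T *m v]mulmxA.
by rewrite -[(f th x)^T *m v]trmxK trmx_mul trmxK mxE big_ord1 !mxE expr2.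
Qed.

Lemma posdef_infomat xi supp :
  (forall x, x \in supp -> 0 <= xi x) ->
  spans [set f th x | x in [set x | (x \in supp) && (0 < xi x)]] ->
  posdef (infomat f xi supp th).
Proof.
move=> xi_ge0 fspan; split=> [|v v0]; first exact: infomat_tr.
have term_ge0 x : x \in undup supp -> 0 <= xi x * ((v^T *m f th x) 0 0) ^+ 2.
  by rewrite mem_undup => /xi_ge0 xi0; rewrite mulr_ge0 ?sqr_ge0.
rewrite infomat_quad big_seq lt0r sumr_ge0 // andbT.
rewrite psumr_eq0 //; apply: contra v0 => /allP terms0; apply/eqP.
apply: (spans_orthogonal_eq0 fspan) => _ [x /andP[xsupp xi_gt0] <-].
have xs : x \in undup supp by rewrite mem_undup.
by move: (terms0 x xs); rewrite xs mulf_eq0 gt_eqF //= sqrf_eq0 => /eqP.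
Qed.

End InformationMatrix.

Section UniformDesign.
Variables (R : realType) (X : choiceType) (n : nat) (xs : 'I_n -> X).

Lemma unif_design_mass_ge0 x : 0 <= unif_design_mass R xs x.
Proof. by rewrite divr_ge0 // sumr_ge0 // => i _; rewrite ler0n. Qed.

Lemma unif_design_mass_gt0 i : 0 < unif_design_mass R xs (xs i).
Proof.
have n_gt0 : (0 < n)%N := leq_ltn_trans (leq0n i) (ltn_ord i).
rewrite divr_gt0 ?ltr0n // (bigD1 i) //= eqxx ltr_pwDl //.
by rewrite sumr_ge0 // => j _; rewrite ler0n.
Qed.

Lemma mem_unif_design_supp i : xs i \in unif_design_supp xs.
Proof. by apply: map_f; rewrite mem_enum. Qed.

Lemma posdef_unif_design (Theta : choiceType) p (f : Theta -> X -> 'cV[R]_p) th :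
  spans [set f th (xs i) | i in [set: 'I_n]] ->
  posdef (infomat f (unif_design_mass R xs) (unif_design_supp xs) th).
Proof.
move=> fspan; apply: posdef_infomat => [x _|v]; first exact: unif_design_mass_ge0.
apply: in_span_subset (fspan v) => _ [i _ <-]; exists (xs i) => //.
by rewrite /= mem_unif_design_supp unif_design_mass_gt0.
Qed.

End UniformDesign.

Theorem lemma2p1 (R : realType) (X Theta : pseudoMetricType R)
  (hX : hausdorff_space X) (hTh : hausdorff_space Theta)
  (cX : compact [set: X]) (cTh : compact [set: Theta])
  (p : nat) (f : Theta -> X -> 'cV[R]_p)
  (hspan : forall th : Theta, spans (range (f th)))
  (hcont : continuous (fun z : X * Theta => f z.2 z.1)) :
  exists (n : nat) (xs : 'I_n -> X),
    forall th : Theta,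
      spans [set f th (xs i) | i in [set: 'I_n]] /\
      posdef (infomat f (unif_design_mass R xs) (unif_design_supp xs) th).
Proof.
have f_cont x : continuous (f^~ x).
  move=> th; apply: (continuous_comp (f := pair x) (g := fun z => f z.2 z.1)).
    by apply: cvg_pair; [exact: cvg_cst | exact: cvg_id].
  exact: hcont.
have [n [xs xs_spans]] := uniform_spanning_points f_cont hspan cTh.
by exists n, xs => th; split; last exact: posdef_unif_design.
Qed.
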